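(* Let $G$ be a multigraph (loops and parallel edges allowed) and $e$ any edge of $G$. Then $$P(\mathcal{H}_G,\lambda)=\lambda P(\mathcal{H}_{G-e},\lambda)-P(\mathcal{H}_{G/e},\lambda),$$ where $G-e$ is obtained by deleting $e$ and $G/e$ by contracting $e$ (for a loop $e$, $G/e=G-e$).
   Context: A hypergraph $\mathcal{H}=(\mathcal{V},\mathcal{E})$ consists of a finite vertex set $\mathcal{V}$ and a set $\mathcal{E}$ of subsets of $\mathcal{V}$, each of size at least $1$, called edges. For a positive integer $\lambda$, a weak proper $\lambda$-colouring of $\mathcal{H}$ is a map $\phi:\mathcal{V}\to\{1,\dots,\lambda\}$ such that $|\{\phi(v):v\in e\}|>1$ for every $e\in\mathcal{E}$. $P(\mathcal{H},\lambda)$ denotes the number of weak proper $\lambda$-colourings; it is a polynomial in $\lambda$. For a multigraph $G=(V,E)$, $\mathcal{H}_G$ is the hypergraph with vertex set $V\cup\{w_e:e\in E\}$ (distinct new vertices $w_e$) and edge set $\{\{u_e,v_e,w_e\}:e\in E\}$, where $u_e,v_e$ are the ends of $e$. *)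

From HB Require Import structures.
From mathcomp Require Import all_boot all_order all_algebra.
Set Implicit Arguments. Unset Strict Implicit. Unset Printing Implicit Defensive.

Record hypergraph := Hypergraph {
  hvert : finType;
  hedges : {set {set hvert}} }.

(* Number of weak proper lambda-colourings; colours {1..lambda} are
   represented by 'I_lambda. *)
Definition chromP (H : hypergraph) (lambda : nat) : nat :=
  #|[set f : {ffun hvert H -> 'I_lambda} |
       [forall A in hedges H, 1 < #|[set f x | x in A]|]]|.

(* A finite multigraph: vertex type, edge type, and the ends of each edge
   (loops: both ends equal; parallel edges: distinct edges, same ends). *)
Record multigraph := Multigraph {
  vert : finType;
  edge : finType;
  ends : edge -> vert * vert }.

(* H_G: vertices V + E (w_e = inr e), edges {u_e, v_e, w_e}. *)
Definition hyp_of (G : multigraph) : hypergraph :=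
  @Hypergraph (vert G + edge G)%type
    [set [set inl (ends x).1; inl (ends x).2; inr x] | x : edge G].

Definition delete_edge (G : multigraph) (e : edge G) : multigraph :=
  @Multigraph (vert G) {x : edge G | x != e} (fun x => ends (val x)).

(* G / e for a non-loop e with ends u, v: v is merged into u. *)
Definition contract_map (G : multigraph) (e : edge G)
  (H : (ends e).1 != (ends e).2) (x : vert G) : {y : vert G | y != (ends e).2} :=
  match boolP (x != (ends e).2) with
  | AltTrue Hx => exist _ x Hx
  | AltFalse _ => exist _ (ends e).1 H
  end.

Definition contract_nonloop (G : multigraph) (e : edge G)
  (H : (ends e).1 != (ends e).2) : multigraph :=
  @Multigraph {y : vert G | y != (ends e).2} {x : edge G | x != e}
    (fun x => (contract_map H (ends (val x)).1, contract_map H (ends (val x)).2)).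

Definition contract_edge (G : multigraph) (e : edge G) : multigraph :=
  match boolP ((ends e).1 != (ends e).2) with
  | AltTrue H => contract_nonloop H
  | AltFalse _ => delete_edge e
  end.

From HB Require Import structures.
From mathcomp Require Import all_boot all_order all_algebra.
Set Implicit Arguments. Unset Strict Implicit. Unset Printing Implicit Defensive.

(* Let T be the set of colourings of H_G that are proper on every hyperedge
   except possibly the one of e.  Forgetting the colour of w_e identifies T
   with (proper colourings of H_{G-e}) x {colours}, so |T| = lambda P(H_{G-e}).
   On the other hand T splits into the proper colourings of H_G and those in
   which u_e, v_e, w_e get one colour; the latter are exactly the proper
   colourings of H_{G/e}, the colour of w_e being forced. *)

Lemma card_in_bij (T1 T2 : finType) (A : {set T1}) (B : {set T2})
    (f : T1 -> T2) (g : T2 -> T1) :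
  {in A, forall x, f x \in B} -> {in B, forall y, g y \in A} ->
  {in A, cancel f g} -> {in B, cancel g f} -> #|A| = #|B|.
Proof.
move=> fAB gBA fK gK.
have -> : B = f @: A.
  apply/setP => y; apply/idP/imsetP => [yB | [x xA ->]]; last exact: fAB.
  by exists (g y); rewrite ?gK ?gBA.
by rewrite card_in_imset //; exact: can_in_inj fK.
Qed.

Lemma card_gt1_set3 (T : finType) (a b c : T) :
  (1 < #|[set a; b; c]|) = (a != b) || (a != c).
Proof.
case: (eqVneq a b) => [<- | ab] /=; last first.
  by apply/card_gt1P; exists a, b; rewrite !inE ab !eqxx orbT.
case: (eqVneq a c) => [<- | ac]; first by rewrite !setUid cards1.
by rewrite setUid cards2 ac.
Qed.

Section ProperColourings.

Variables (V E I : finType) (ends : E -> V * V).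

Definition edge_ok (f : V + E -> I) (x : E) :=
  (f (inl (ends x).1) != f (inl (ends x).2)) || (f (inl (ends x).1) != f (inr x)).

Lemma edge_okE (f : V + E -> I) (x : E) :
  edge_ok f x = (1 < #|[set f y | y in [set inl (ends x).1; inl (ends x).2; inr x]]|).
Proof. by rewrite !imsetU !imset_set1 card_gt1_set3. Qed.

Lemma edge_okN (f : V + E -> I) (x : E) :
  ~~ edge_ok f x =
  (f (inl (ends x).1) == f (inl (ends x).2)) && (f (inl (ends x).1) == f (inr x)).
Proof. by rewrite negb_or !negbK. Qed.

End ProperColourings.

Notation colouring G l := {ffun (vert G + edge G)%type -> 'I_l}.

Definition proper_colourings (G : multigraph) (l : nat) : {set colouring G l} :=
  [set f : colouring G l | [forall x, edge_ok (@ends G) f x]].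

Lemma chromP_hyp_of (G : multigraph) (l : nat) :
  chromP (hyp_of G) l = #|proper_colourings G l|.
Proof.
apply: eq_card => f; rewrite !inE; apply/forallP/forallP => /= fP.
  by move=> x; rewrite edge_okE; apply: (implyP (fP _)); exact: imset_f.
by move=> A; apply/implyP => /imsetP [x _ ->]; rewrite -edge_okE.
Qed.

Section DeleteContract.

Variables (G : multigraph) (e : edge G) (l : nat).

Definition proper_off_e : {set colouring G l} :=
  [set f : colouring G l | [forall x, (x != e) ==> edge_ok (@ends G) f x]].

Definition mono_at_e : {set colouring G l} :=
  [set f in proper_off_e | ~~ edge_ok (@ends G) f e].

Lemma card_proper_off_e :
  #|proper_off_e| = (#|proper_colourings G l| + #|mono_at_e|)%N.
Proof.
have proper_sub_off_e : proper_colourings G l \subset proper_off_e.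
  by apply/subsetP => f; rewrite !inE => /forallP fP; apply/forallP => x; rewrite fP implybT.
have offD : proper_off_e :\: proper_colourings G l = mono_at_e.
  apply/setP => f; rewrite !inE andbC; apply: andb_id2l => /forallP offP.
  apply/idP/idP => [notS | bad]; last by apply/forallP => /(_ e); rewrite (negbTE bad).
  apply: contra notS => ok; apply/forallP => x.
  by case: (eqVneq x e) => [-> // | xe]; have := offP x; rewrite xe.
by rewrite -(cardsID (proper_colourings G l) proper_off_e) (setIidPr proper_sub_off_e) offD.
Qed.

Definition restr_delete (f : colouring G l) : colouring (delete_edge e) l :=
  [ffun y => match y with inl v => f (inl v) | inr x => f (inr (val x)) end].

Definition ext_delete (g : colouring (delete_edge e) l) (c : 'I_l) : colouring G l :=
  [ffun z => match z with
     | inl v => g (inl v)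
     | inr x => if insub x is Some x' then g (inr x') else c end].

Lemma ext_deleteE (g : colouring (delete_edge e) l) c (x : edge (delete_edge e)) :
  ext_delete g c (inr (val x)) = g (inr x).
Proof. by rewrite ffunE insubT ?(valP x) //= => xe; congr (g (inr _)); apply: val_inj. Qed.

Lemma ext_delete_at_e (g : colouring (delete_edge e) l) c : ext_delete g c (inr e) = c.
Proof. by rewrite ffunE insubF ?eqxx. Qed.

Lemma edge_ok_restr_delete (f : colouring G l) (x : edge (delete_edge e)) :
  edge_ok (@ends (delete_edge e)) (restr_delete f) x = edge_ok (@ends G) f (val x).
Proof. by rewrite /edge_ok !ffunE. Qed.

Lemma edge_ok_ext_delete (g : colouring (delete_edge e) l) c (x : edge (delete_edge e)) :
  edge_ok (@ends G) (ext_delete g c) (val x) = edge_ok (@ends (delete_edge e)) g x.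
Proof. by rewrite /edge_ok ext_deleteE !ffunE. Qed.

Lemma ext_restr_delete (f : colouring G l) :
  ext_delete (restr_delete f) (f (inr e)) = f.
Proof.
apply/ffunP => -[v | x]; rewrite !ffunE //.
by case: insubP => [x' _ <- | /negbNE /eqP ->]; rewrite ?ffunE.
Qed.

Lemma restr_ext_delete (g : colouring (delete_edge e) l) c :
  restr_delete (ext_delete g c) = g.
Proof. by apply/ffunP => -[v | x]; rewrite ffunE ?ext_deleteE ?ffunE. Qed.

Lemma proper_off_e_ext_delete (g : colouring (delete_edge e) l) c :
  g \in proper_colourings (delete_edge e) l -> ext_delete g c \in proper_off_e.
Proof.
rewrite !inE => /forallP gP; apply/forallP => x; apply/implyP => xe.
by have := gP (Sub x xe); rewrite -(edge_ok_ext_delete _ c) SubK.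
Qed.

Lemma proper_restr_delete (f : colouring G l) :
  f \in proper_off_e -> restr_delete f \in proper_colourings (delete_edge e) l.
Proof.
rewrite !inE => /forallP fP; apply/forallP => x.
by rewrite edge_ok_restr_delete; have := fP (val x); rewrite (valP x).
Qed.

Lemma card_proper_off_e_delete :
  #|proper_off_e| = (l * #|proper_colourings (delete_edge e) l|)%N.
Proof.
rewrite -[l in (l * _)%N]card_ord -cardsT mulnC -cardsX.
apply: (card_in_bij (f := fun f => (restr_delete f, f (inr e)))
                    (g := fun p => ext_delete p.1 p.2)).
- by move=> f /proper_restr_delete fP; rewrite in_setX fP in_setT.
- by move=> [g c]; rewrite in_setX in_setT andbT; exact: proper_off_e_ext_delete.
- by move=> f _; exact: ext_restr_delete.
- by move=> [g c] _; rewrite /= restr_ext_delete ext_delete_at_e.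
Qed.

(* For a loop, a monochromatic triple only constrains the colour of w_e. *)
Lemma card_mono_at_loop : (ends e).1 = (ends e).2 ->
  #|mono_at_e| = #|proper_colourings (delete_edge e) l|.
Proof.
move=> loop_e.
apply: (card_in_bij (f := restr_delete)
                    (g := fun g => ext_delete g (g (inl (ends e).1)))).
- by move=> f; rewrite inE => /andP [/proper_restr_delete].
- move=> g gP; rewrite inE proper_off_e_ext_delete // edge_okN ext_delete_at_e.
  by rewrite !ffunE loop_e !eqxx.
- move=> f; rewrite inE edge_okN => /andP [_ /andP [_ /eqP fe]].
  by rewrite [in X in ext_delete _ X]ffunE fe ext_restr_delete.
- by move=> g _; exact: restr_ext_delete.
Qed.

End DeleteContract.

Lemma contract_mapE (G : multigraph) (e : edge G) (H : (ends e).1 != (ends e).2) x :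
  val (contract_map H x) = if x == (ends e).2 then (ends e).1 else x.
Proof.
by rewrite /contract_map; destruct boolP as [h | h]; rewrite /= ?(negbTE h) ?(negbNE h).
Qed.

Section Contraction.

Variables (G : multigraph) (e : edge G) (l : nat).
Hypothesis nonloop : (ends e).1 != (ends e).2.

Let Ge := contract_nonloop nonloop.

Lemma contract_map_val (y : vert Ge) : contract_map nonloop (val y) = y.
Proof. by apply: val_inj; rewrite contract_mapE (negbTE (valP y)). Qed.

Lemma contract_map_ends : contract_map nonloop (ends e).2 = contract_map nonloop (ends e).1.
Proof. by apply: val_inj; rewrite !contract_mapE eqxx (negbTE nonloop). Qed.

Definition restr_contract (f : colouring G l) : colouring Ge l :=
  [ffun y => match y with inl v => f (inl (val v)) | inr x => f (inr (val x)) end].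

Definition ext_contract (g : colouring Ge l) : colouring G l :=
  ext_delete [ffun y => match y with
                | inl v => g (inl (contract_map nonloop v))
                | inr x => g (inr x) end]
             (g (inl (contract_map nonloop (ends e).1))).

Lemma ext_contractE (g : colouring Ge l) v :
  ext_contract g (inl v) = g (inl (contract_map nonloop v)).
Proof. by rewrite !ffunE. Qed.

Lemma mono_colour_contract_map (f : colouring G l) v :
  f \in mono_at_e e l -> f (inl (val (contract_map nonloop v))) = f (inl v).
Proof.
rewrite inE edge_okN => /andP [_ /andP [/eqP f12 _]].
by rewrite contract_mapE; case: eqP => // ->.
Qed.

Lemma card_mono_at_nonloop :
  #|mono_at_e e l| = #|proper_colourings Ge l|.
Proof.
apply: (card_in_bij (f := restr_contract) (g := ext_contract)).
- move=> f fM; move: (fM); rewrite !inE => /andP [/forallP offP _].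
  apply/forallP => x; have := offP (val x); rewrite (valP x) /=.
  by rewrite /edge_ok !ffunE /= !(mono_colour_contract_map _ fM).
- move=> g; rewrite !inE => /forallP gP; apply/andP; split.
    apply/forallP => x; apply/implyP => xe; have := gP (Sub x xe).
    rewrite -[x]/(val (Sub x xe : edge (delete_edge e))) edge_ok_ext_delete.
    by rewrite /edge_ok !ffunE.
  by rewrite edge_okN !ext_contractE ffunE insubF ?eqxx //= contract_map_ends eqxx.
- move=> f fM; move: (fM); rewrite inE edge_okN => /andP [_ /andP [_ /eqP f1e]].
  apply/ffunP => -[v | x]; rewrite ?ext_contractE ffunE /= ?mono_colour_contract_map //.
  case: insubP => [x' _ <- | /negbNE /eqP ->]; rewrite !ffunE //.
  by rewrite mono_colour_contract_map // f1e.
- move=> g _; apply/ffunP => -[v | x]; rewrite ffunE.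
    by rewrite ext_contractE contract_map_val.
  by rewrite ext_deleteE ffunE.
Qed.

End Contraction.

Lemma card_mono_at_e (G : multigraph) (e : edge G) (l : nat) :
  #|mono_at_e e l| = chromP (hyp_of (contract_edge e)) l.
Proof.
rewrite chromP_hyp_of /contract_edge; destruct boolP as [nonloop | loop_e].
  exact: card_mono_at_nonloop.
exact/card_mono_at_loop/eqP/negbNE.
Qed.

Import GRing.Theory.
Local Open Scope ring_scope.

Theorem proposition5 (G : multigraph) (e : edge G) (lambda : nat) :
  (0 < lambda)%N ->
  (chromP (hyp_of G) lambda)%:Z =
    lambda%:Z * (chromP (hyp_of (delete_edge e)) lambda)%:Z
    - (chromP (hyp_of (contract_edge e)) lambda)%:Z.
Proof.
move=> _.
have split_off_e : (lambda * chromP (hyp_of (delete_edge e)) lambda =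
    chromP (hyp_of G) lambda + chromP (hyp_of (contract_edge e)) lambda)%N.
  by rewrite -card_mono_at_e !chromP_hyp_of -card_proper_off_e_delete card_proper_off_e.
by rewrite -PoszM split_off_e PoszD addrK.
Qed.
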